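(* Let $n\geq2$, let $\lambda_1,\dots,\lambda_n\geq 0$ with $\sum_{i=1}^n\lambda_i=1$, let $\rho>0$ and let $z$ be a harmonic function in a neighborhood of the ball $B_\rho(0)\subset\mathbb{R}^n$ satisfying $z(0)=0$, $\nabla z(0)=0$, $D^2z(0)=0$. If the function $$w(x)=\sqrt{\tfrac12\sum_{i=1}^n\lambda_i x_i^2+z(x)}$$ is (well defined and) convex in $B_\rho(0)$, then $z\equiv 0$. *)

From HB Require Import structures.
From mathcomp Require Import all_boot all_order all_algebra.
From mathcomp Require Import all_classical all_reals all_analysis.
Set Implicit Arguments. Unset Strict Implicit. Unset Printing Implicit Defensive.
Import Order.TTheory GRing.Theory Num.Theory.
Import numFieldNormedType.Exports.
Local Open Scope classical_set_scope.
Local Open Scope ring_scope.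

(* R^n is modelled as row vectors 'rV[R]_n; coordinate x_i is x 0 i. *)

Definition ebasis (R : realType) (n : nat) (i : 'I_n) : 'rV[R]_n := delta_mx 0 i.

Definition partial (R : realType) (n : nat) (f : 'rV[R]_n -> R) (i : 'I_n)
  : 'rV[R]_n -> R := fun x => derive f x (ebasis R i).

Definition sqnorm (R : realType) (n : nat) (x : 'rV[R]_n) : R :=
  \sum_(i < n) x 0 i ^+ 2.

Definition eball0 (R : realType) (n : nat) (rho : R) : set 'rV[R]_n :=
  [set x | sqnorm x < rho ^+ 2].
Definition ecball0 (R : realType) (n : nat) (rho : R) : set 'rV[R]_n :=
  [set x | sqnorm x <= rho ^+ 2].

Definition laplacian (R : realType) (n : nat) (f : 'rV[R]_n -> R) (x : 'rV[R]_n) : R :=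
  \sum_(i < n) partial (partial f i) i x.

Definition harmonic_on (R : realType) (n : nat) (U : set 'rV[R]_n)
    (z : 'rV[R]_n -> R) : Prop :=
  open U /\
  forall x, U x ->
    [/\ differentiable z x,
        (forall i, differentiable (partial z i) x),
        (forall i j, {for x, continuous (partial (partial z i) j)}) &
        laplacian z x = 0].

Definition convex_on (R : realType) (n : nat) (A : set 'rV[R]_n)
    (f : 'rV[R]_n -> R) : Prop :=
  forall x y (t : R), A x -> A y -> 0 <= t -> t <= 1 ->
    f (t *: x + (1 - t) *: y) <= t * f x + (1 - t) * f y.

From HB Require Import structures.
From mathcomp Require Import all_boot all_order all_algebra.
From mathcomp Require Import all_classical all_reals all_analysis.
From mathcomp Require Import ring lra.
Import Order.TTheory GRing.Theory Num.Theory.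
Import numFieldNormedType.Exports.
Local Open Scope classical_set_scope.
Local Open Scope ring_scope.

(* Convexity of w with w(0) = 0 gives w(tx) <= t w(x), hence z(tx) <= t^2 z(x)
   for 0 < t <= 1, while the flatness of z at 0 makes z(tx) = o(t^2); together
   they force z >= 0 on the ball.  A nonnegative harmonic function vanishing at
   an interior point vanishes identically: by a Hopf-type barrier argument,
   positivity of z at the centre of a closed ball in which z >= 0 propagates to
   the whole open ball, so the zero set of z is carried from 0 along each segment
   [0, x] in steps shorter than half the distance to the boundary. *)

Section Euclidean.
Context {R : realType} {n : nat}.
Implicit Types (x y : 'rV[R]_n) (a b : R).

Definition dotp x y : R := \sum_(i < n) x 0 i * y 0 i.

Lemma sqnorm_ge0 x : 0 <= sqnorm x.
Proof. by apply: sumr_ge0 => i _; rewrite sqr_ge0. Qed.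

Lemma sqnorm0 : sqnorm (0 : 'rV[R]_n) = 0.
Proof. by rewrite /sqnorm big1 // => i _; rewrite mxE expr0n. Qed.

Lemma sqnormD x y : sqnorm (x + y) = sqnorm x + 2 * dotp x y + sqnorm y.
Proof.
rewrite /sqnorm /dotp mulr_sumr -!big_split /=; apply: eq_bigr => i _.
by rewrite mxE; ring.
Qed.

Lemma sqnormZ a x : sqnorm (a *: x) = a ^+ 2 * sqnorm x.
Proof. by rewrite /sqnorm mulr_sumr; apply: eq_bigr => i _; rewrite mxE; ring. Qed.

Lemma dotpZr a x y : dotp x (a *: y) = a * dotp x y.
Proof. by rewrite /dotp mulr_sumr; apply: eq_bigr => i _; rewrite mxE; ring. Qed.

Lemma sqr_coord_le_sqnorm x i : x 0 i ^+ 2 <= sqnorm x.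
Proof. by rewrite /sqnorm (bigD1 i) //= lerDl; apply: sumr_ge0 => j _; apply: sqr_ge0. Qed.

Lemma sqnorm_line a i x :
  sqnorm (a *: delta_mx 0 i + x) = sqnorm x + 2 * a * x 0 i + a ^+ 2.
Proof.
rewrite /sqnorm (bigD1 i) //= [in RHS](bigD1 i) //= !mxE !eqxx /= mulr1.
rewrite (eq_bigr (fun j => x 0 j ^+ 2)); first by ring.
by move=> j /negbTE ji; rewrite !mxE ji mulr0 add0r.
Qed.

(* The discriminant of the nonnegative quadratic [m |-> sqnorm (x + m *: y)]. *)
Lemma dotp_sqr_le x y : dotp x y ^+ 2 <= sqnorm x * sqnorm y.
Proof.
have quad m : 0 <= sqnorm x + 2 * m * dotp x y + m ^+ 2 * sqnorm y.
  by have := sqnorm_ge0 (x + m *: y); rewrite sqnormD sqnormZ dotpZr mulrA.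
have x0 := sqnorm_ge0 x; have y0 := sqnorm_ge0 y.
have [y00|yn0] := eqVneq (sqnorm y) 0.
  have [->|d0] := eqVneq (dotp x y) 0; first by rewrite y00; lra.
  have := quad (- (sqnorm x + 1) / (2 * dotp x y)); rewrite y00 mulr0 addr0.
  have -> : 2 * (- (sqnorm x + 1) / (2 * dotp x y)) * dotp x y = - (sqnorm x + 1).
    by field; rewrite d0.
  lra.
have ypos : 0 < sqnorm y by rewrite lt_def yn0 y0.
have := quad (- dotp x y / sqnorm y).
have -> : sqnorm x + 2 * (- dotp x y / sqnorm y) * dotp x y +
    (- dotp x y / sqnorm y) ^+ 2 * sqnorm y = sqnorm x - dotp x y ^+ 2 / sqnorm y.
  by field; rewrite yn0.
by rewrite subr_ge0 ler_pdivrMr.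
Qed.

Lemma sqnormD_le {x y a b} : 0 <= a -> 0 <= b ->
  sqnorm x <= a ^+ 2 -> sqnorm y <= b ^+ 2 -> sqnorm (x + y) <= (a + b) ^+ 2.
Proof.
move=> a0 b0 xa yb; rewrite sqnormD.
have : dotp x y ^+ 2 <= (a * b) ^+ 2.
  apply: le_trans (dotp_sqr_le x y) _; rewrite exprMn.
  by apply: ler_pM => //; apply: sqnorm_ge0.
move=> dab2; have ab0 : 0 <= a * b by apply: mulr_ge0.
have : dotp x y <= a * b by nra.
lra.
Qed.

Lemma differentiable_sqnormB y x :
  differentiable (fun v : 'rV[R]_n => sqnorm (v - y)) x.
Proof.
have -> : (fun v : 'rV[R]_n => sqnorm (v - y)) =
    \sum_(i < n) (fun v : 'rV[R]_n => (v 0 i - y 0 i) ^+ 2).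
  by apply/funext => v; rewrite /sqnorm fct_sumE; apply: eq_bigr => i _; rewrite !mxE.
apply: differentiable_sum => i.
have -> : (fun v : 'rV[R]_n => (v 0 i - y 0 i) ^+ 2) =
    (fun v : 'rV[R]_n => v 0 i - y 0 i) ^+ 2 by [].
by apply/differentiableX/differentiableB => //; apply: differentiable_coord.
Qed.

Lemma continuous_sqnormB y : continuous (fun v : 'rV[R]_n => sqnorm (v - y)).
Proof. by move=> x; apply/differentiable_continuous/differentiable_sqnormB. Qed.

Lemma compact_annulus y a b :
  compact [set x | a ^+ 2 <= sqnorm (x - y) <= b ^+ 2].
Proof.
have box := rV_compact (fun i => @segment_compact R (y 0 i - `|b|) (y 0 i + `|b|)).
apply: subclosed_compact box _.
  have -> : [set x | a ^+ 2 <= sqnorm (x - y) <= b ^+ 2] =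
      (fun v => sqnorm (v - y)) @^-1` ([set r | a ^+ 2 <= r] `&` [set r | r <= b ^+ 2]).
    by apply/seteqP; split => x /=; [move=> /andP[] | move=> [-> ->]].
  by apply: preimage_closed; [move=> x _; apply: continuous_sqnormB
                             | apply: closedI; [apply: closed_ge | apply: closed_le]].
move=> x /andP[_ xb] i /=; rewrite in_itv /= -ler_distl.
have := sqr_coord_le_sqnorm (x - y) i; rewrite !mxE => /le_trans/(_ xb).
by rewrite -real_normK ?num_real // -[b ^+ 2]real_normK ?num_real // ler_pXn2r ?nnegrE.
Qed.

Lemma near_sqnorm {P : 'rV[R]_n -> Prop} {y} : (\forall x \near y, P x) ->
  exists2 s : R, 0 < s & forall x, sqnorm (x - y) <= s ^+ 2 -> P x.
Proof.
move=> /nbhs_ballP[d /= d0 Pd]; exists (d / 2) => [|x xd]; first by rewrite divr_gt0.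
apply: Pd; split => // i j; rewrite (ord1 i) /ball /= distrC.
have := sqr_coord_le_sqnorm (x - y) j; rewrite !mxE => /le_trans/(_ xd).
rewrite -real_normK ?num_real // ler_pXn2r ?nnegrE ?divr_ge0 ?(ltW d0) //.
by move/le_lt_trans; apply; rewrite ltr_pdivrMr // ltr_pMr // ltr1n.
Qed.

End Euclidean.

Section OneVariable.
Context {R : realType}.
Implicit Types (phi g : R -> R) (L c : R).

Lemma ball0E (d t : R) : ball 0 d t = (`|t| < d).
Proof. by rewrite /ball /= sub0r normrN. Qed.

Lemma mvt_second_order {phi g L c} : 0 < c ->
  (\forall t \near (0 : R), is_derive t (1 : R) phi (g t)) -> is_derive (0 : R) 1 g L ->
  \forall t \near (0 : R)^'+, exists2 xi, 0 < xi < t &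
    `|phi t - phi 0 - g 0 * t - L * xi * t| < c * xi * t.
Proof.
move=> c0 dphi [dg Lg].
have quot : \forall h \near 0^', `|L - h^-1 * (g h - g 0)| < c.
  have : (fun h : R => h^-1 *: ((g \o shift 0) (h *: 1) - g 0)) @ 0^' --> L.
    by rewrite -Lg; apply: dg.
  move/cvgrPdist_lt => /(_ c c0); apply: filterS => h.
  by rewrite /= addr0 [h%:A]mulr1.
rewrite near_withinE in quot.
have [d1 /= d10 quotd] := (nbhs_ballP _ _).1 quot.
have [d2 /= d20 dphid] := (nbhs_ballP _ _).1 dphi.
rewrite near_withinE; apply/nbhs_ballP.
exists (Num.min d1 d2); first by rewrite /= lt_min d10 d20.
move=> t; rewrite ball0E lt_min => /andP[td1 td2] /= t0.
rewrite gtr0_norm // in td1 td2.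
have dphi_in x : 0 <= x <= t -> is_derive x 1 phi (g x).
  by move=> /andP[x0 xt]; apply: dphid; rewrite ball0E ger0_norm // (le_lt_trans xt).
have [xi xit phiE] : exists2 xi, xi \in `]0, t[ & phi t - phi 0 = g xi * (t - 0).
  apply: MVT => //.
    by move=> x; rewrite in_itv /= => /andP[x0 xt]; apply: dphi_in; rewrite !ltW.
  apply: continuous_in_subspaceT => x; rewrite inE /= in_itv /= => /dphi_in[dx _].
  exact/differentiable_continuous/derivable1_diffP.
move: xit; rewrite in_itv /= => /andP[xi0 xit]; exists xi; first by rewrite xi0.
have -> : phi t - phi 0 - g 0 * t - L * xi * t = - (L - xi^-1 * (g xi - g 0)) * (xi * t).
  by rewrite phiE subr0; field; rewrite gt_eqF.
rewrite normrM normrN [`|xi * t|]ger0_norm ?mulr_ge0 ?ltW // mulrA !ltr_pM2r //.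
by apply: quotd; [rewrite ball0E gtr0_norm // (lt_trans xit) | rewrite gt_eqF].
Qed.

Lemma local_min_derive2_ge0 {phi g L} :
  (\forall t \near (0 : R), phi 0 <= phi t) ->
  (\forall t \near (0 : R), is_derive t (1 : R) phi (g t)) -> is_derive (0 : R) 1 g L -> 0 <= L.
Proof.
move=> phimin dphi dg.
have g00 : g 0 = 0.
  have [d /= d0 dmin] := (nbhs_ballP _ _).1 (filterI phimin dphi).
  have in_d x : x \in `](- d), d[ -> ball 0 d x by rewrite in_itv ball0E ltr_norml.
  have fermat : is_derive (0 : R) 1 phi 0.
    apply: (derive1_at_min (a := - d) (b := d)).
    - lra.
    - by move=> x /in_d/dmin[_ []].
    - by rewrite in_itv /= oppr_lt0 d0.
    - by move=> x /in_d/dmin[].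
  by have [_ <-] := nbhs_singleton dphi; case: fermat.
rewrite leNgt; apply/negP => L0; have NL0 : 0 < - L by rewrite oppr_gt0.
have phimin_right : \forall t \near (0 : R)^'+, phi 0 <= phi t.
  by rewrite near_withinE; apply: filterS phimin => t ? _.
have [t [/= [xi /andP[xi0 _] bound] tmin]] :=
  filter_ex (filterI (mvt_second_order NL0 dphi dg) phimin_right).
move: bound; rewrite g00 mul0r subr0 mulNr => /(le_lt_trans (ler_norm _)).
by rewrite -mulrA; move: tmin; lra.
Qed.

Lemma flat_near0_gt_neg_quadratic {phi g c} : 0 < c ->
  (\forall t \near (0 : R), is_derive t (1 : R) phi (g t)) -> g 0 = 0 -> is_derive (0 : R) 1 g 0 ->
  \forall t \near (0 : R)^'+, - c * t ^+ 2 < phi t - phi 0.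
Proof.
move=> c0 dphi g00 dg; have := mvt_second_order c0 dphi dg.
apply: filterS => t [xi /andP[xi0 xit]].
rewrite g00 !mul0r !subr0 => /ltr_normlP[bound _].
have : c * xi * t < c * t ^+ 2.
  by rewrite expr2 mulrA ltr_pM2r ?ltr_pM2l // (lt_trans xi0).
lra.
Qed.

End OneVariable.

Section Directional.
Context {R : realType} {n : nat}.
Implicit Types (f : 'rV[R]_n -> R) (x y v : 'rV[R]_n).

Lemma is_derive_line {f v x t d} :
  is_derive (t *: v + x) v f d -> is_derive t 1 (fun s : R => f (s *: v + x)) d.
Proof.
move=> [fd fD].
have quotE : (fun h : R => h^-1 *: (((fun s => f (s *: v + x)) \o shift t) (h *: 1)
                                    - f (t *: v + x)))
    = (fun h : R => h^-1 *: ((f \o shift (t *: v + x)) (h *: v) - f (t *: v + x))).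
  apply/funext => h /=; congr (_ *: (f _ - _)).
  by rewrite /shift /= [h *: 1]mulr1 scalerDl addrA.
by apply: DeriveDef; rewrite /derivable /derive quotE.
Qed.

Lemma differentiable_is_derive_line {f v x t} : differentiable f (t *: v + x) ->
  is_derive t 1 (fun s : R => f (s *: v + x)) ('D_v f (t *: v + x)).
Proof. by move=> df; apply/is_derive_line/derivableP/diff_derivable. Qed.

Lemma near_line {P : 'rV[R]_n -> Prop} v {x} :
  (\forall y \near x, P y) -> \forall t \near (0 : R), P (t *: v + x).
Proof.
have line_cvg : (fun t : R => t *: v + x) @ (0 : R) --> x.
  rewrite -[X in _ --> X]add0r -[X in X + _](scale0r v).
  by apply: cvgD; [apply: cvgZl; apply: cvg_id | apply: cvg_cst].
by move=> /line_cvg.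
Qed.

Lemma derive_partialE f x v : differentiable f x ->
  'D_v f x = \sum_(i < n) v 0 i * partial f i x.
Proof.
move=> df; rewrite deriveE // {1}(row_sum_delta v) linear_sum.
by apply: eq_bigr => i _; rewrite linearZ /= /partial /ebasis -deriveE.
Qed.

Lemma flat_subquadratic_ge0 f x :
  (\forall y \near 0, differentiable f y) -> (forall i, differentiable (partial f i) 0) ->
  f 0 = 0 -> (forall i, partial f i 0 = 0) -> (forall i j, partial (partial f i) j 0 = 0) ->
  (forall t, 0 < t -> t <= 1 -> f (t *: x) <= t ^+ 2 * f x) -> 0 <= f x.
Proof.
move=> df dpf f0 f1 f2 subquad; rewrite leNgt; apply/negP => fx0.
have c0 : 0 < - f x by rewrite oppr_gt0.
pose dir i (t : R) := partial f i (t *: x + 0).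
pose Psi := \sum_(i < n) x 0 i *: dir i.
have dphi : \forall t \near (0 : R), is_derive t (1 : R) (fun s => f (s *: x + 0)) (Psi t).
  apply: filterS (near_line x df) => t dft.
  apply: is_derive_eq (differentiable_is_derive_line dft) _.
  by rewrite derive_partialE // /Psi fct_sumE; apply: eq_bigr => i _; rewrite !fctE.
have Psi0 : Psi 0 = 0.
  by rewrite /Psi fct_sumE big1 // => i _; rewrite !fctE /dir scale0r add0r f1 scaler0.
have ddir i : is_derive (0 : R) 1 (dir i) 0.
  have dpf0 : differentiable (partial f i) (0 *: x + 0) by rewrite scale0r addr0.
  apply: is_derive_eq (differentiable_is_derive_line dpf0) _.
  by rewrite derive_partialE // big1 // => j _; rewrite scale0r addr0 f2 mulr0.
have dPsi : is_derive (0 : R) 1 Psi 0.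
  by rewrite /Psi; apply: is_derive_eq; rewrite big1 // => i _; apply: scaler0.
have [t [[/= lower [t0 t1]]]] := filter_ex (filterI
  (flat_near0_gt_neg_quadratic c0 dphi Psi0 dPsi)
  (filterI (nbhs_right_gt 0) (nbhs_right_le ltr01))).
move: lower; rewrite scale0r !addr0 f0 subr0.
by move: (subquad t t0 t1); lra.
Qed.

(* The right-hand side is [d_ii (f - eps (K - |x - y|^2)^(k+2))] at [x0], written out. *)
Lemma local_min_partial2_barrier {f y x0} {K eps : R} {k : nat} i :
  (\forall x \near x0, differentiable f x) -> differentiable (partial f i) x0 ->
  (\forall x \near x0, f x0 - eps * (K - sqnorm (x0 - y)) ^+ k.+2
                       <= f x - eps * (K - sqnorm (x - y)) ^+ k.+2) ->
  0 <= partial (partial f i) i x0 + eps * k.+2%:R *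
         (2 * (K - sqnorm (x0 - y)) ^+ k.+1
          - 4 * k.+1%:R * (K - sqnorm (x0 - y)) ^+ k * ((x0 - y) 0 i) ^+ 2).
Proof.
move=> df dpf x0min.
set e := ebasis R i; set h := K - sqnorm (x0 - y); set a := (x0 - y) 0 i.
have hE t : K - sqnorm (t *: e + x0 - y) = h - 2 * a * t - t ^+ 2.
  by rewrite -addrA sqnorm_line /h /a; ring.
pose q := cst h - (2 * a) *: (@idfun R) - (@idfun R) ^+ 2.
pose dq := cst (- (2 * a)) - 2 *: (@idfun R).
pose phi := (fun t => f (t *: e + x0)) - eps *: q ^+ k.+2.
pose dphi := (fun t => partial f i (t *: e + x0)) - eps *: (k.+2%:R *: (q ^+ k.+1 * dq)).
have phiE t : phi t = f (t *: e + x0) - eps * (K - sqnorm (t *: e + x0 - y)) ^+ k.+2.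
  by rewrite hE /phi /q !fctE.
apply: (@local_min_derive2_ge0 _ phi dphi).
- by apply: filterS (near_line e x0min) => t; rewrite !phiE scale0r add0r.
- apply: filterS (near_line e df) => t dft.
  have := differentiable_is_derive_line dft; rewrite -/(partial f i _) => dline.
  apply: is_derive_eq.
  by rewrite /dphi /dq !fctE /= ![_%:A]mulr1 /GRing.scale /=; ring.
- have dpf0 : differentiable (partial f i) (0 *: e + x0) by rewrite scale0r add0r.
  have := differentiable_is_derive_line dpf0.
  rewrite scale0r add0r -/(partial (partial f i) i x0) => dline.
  apply: is_derive_eq.
  rewrite /dq /q /h !fctE /= ![_%:A]mulr1 /GRing.scale /=.
  by rewrite !mulr0 expr0n /= !subr0 exprS; ring.
Qed.

End Directional.

Section Harmonic.
Context {R : realType} {n : nat}.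
Context {z : 'rV[R]_n -> R} {U : set 'rV[R]_n}.
Hypothesis hz : harmonic_on U z.

Lemma harmonic_differentiable_near {x} : U x -> \forall v \near x, differentiable z v.
Proof.
move: hz => [oU hzU] Ux.
by apply: filterS (open_nbhs_nbhs (conj oU Ux)) => v /hzU[].
Qed.

(* At a local minimum of [z - eps (K - |x - y|^2)^(k+2)] the Laplacian of the
   barrier term cannot be positive, since z is harmonic. *)
Lemma harmonic_barrier_local_min (k : nat) {y x0 : 'rV[R]_n} {K eps : R} :
  U x0 -> 0 < eps -> 0 < K - sqnorm (x0 - y) ->
  (\forall x \near x0, z x0 - eps * (K - sqnorm (x0 - y)) ^+ k.+2
                       <= z x - eps * (K - sqnorm (x - y)) ^+ k.+2) ->
  2 * k.+1%:R * sqnorm (x0 - y) <= n%:R * (K - sqnorm (x0 - y)).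
Proof.
move=> Ux0 eps0 hpos x0min; have [_ dpz _ lapz] := hz.2 x0 Ux0.
have partial2 i :=
  local_min_partial2_barrier i (harmonic_differentiable_near Ux0) (dpz i) x0min.
have /(_ xpredT) := sumr_ge0 (index_enum _) (fun i _ => partial2 i).
have lap0 : \sum_(i < n) partial (partial z i) i x0 = 0 := lapz.
rewrite big_split /= lap0 add0r -mulr_sumr sumrB sumr_const card_ord -mulr_sumr.
rewrite -[\sum_(i < n) _ ^+ 2]/(sqnorm (x0 - y)) -[_ *+ n]mulr_natr exprS.
set h := K - sqnorm (x0 - y); set D := sqnorm (x0 - y).
have -> : 2 * (h * h ^+ k) * n%:R - 4 * k.+1%:R * h ^+ k * D =
    (2 * h ^+ k) * (n%:R * h - 2 * k.+1%:R * D) by ring.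
by rewrite !pmulr_rge0 ?mulr_gt0 ?exprn_gt0 ?ltr0n // subr_ge0.
Qed.

(* On the open annulus [u := z - eps (r^2 - |x - y|^2)^(k+2)] has negative
   Laplacian by the choice of [k], so it has no interior minimum below 0. *)
Lemma harmonic_annulus_barrier (y : 'rV[R]_n) {s r eps : R} {k : nat} :
  let A := [set x | s ^+ 2 <= sqnorm (x - y) <= r ^+ 2] in
  0 < eps -> n%:R * (r ^+ 2 - s ^+ 2) <= 2 * k.+1%:R * s ^+ 2 -> A `<=` U ->
  (forall x, sqnorm (x - y) = s ^+ 2 -> eps * (r ^+ 2 - s ^+ 2) ^+ k.+2 <= z x) ->
  (forall x, sqnorm (x - y) = r ^+ 2 -> 0 <= z x) ->
  forall x, A x -> eps * (r ^+ 2 - sqnorm (x - y)) ^+ k.+2 <= z x.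
Proof.
move=> A eps0 kbig AU inner outer x Ax; rewrite -subr_ge0.
pose u := z - eps *: (cst (r ^+ 2) - (fun v => sqnorm (v - y))) ^+ k.+2.
have uE v : u v = z v - eps * (r ^+ 2 - sqnorm (v - y)) ^+ k.+2 by rewrite /u !fctE.
have uc : {within A, continuous u}.
  apply: continuous_in_subspaceT => v; rewrite inE => /AU Uv.
  have [dzv _ _ _] := hz.2 v Uv.
  apply/differentiable_continuous/differentiableB => //.
  apply/differentiableZ/differentiableX/differentiableB => //.
  exact: differentiable_sqnormB.
have [xm /set_mem Axm xmmin] := EVT_min_rV (ex_intro _ x Ax) (compact_annulus y s r) uc.
rewrite -uE; apply: le_trans (xmmin x (mem_set Ax)); rewrite leNgt; apply/negP => um.
move: (Axm) => /andP[]; set D := sqnorm (xm - y) => sD Dr.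
have {}sD : s ^+ 2 < D.
  rewrite lt_def sD andbT; apply/eqP => Ds.
  by move: um (inner xm Ds); rewrite uE -/D Ds; lra.
have {}Dr : D < r ^+ 2.
  rewrite lt_def Dr andbT; apply/eqP => rD.
  by move: um (outer xm (esym rD)); rewrite uE -/D -rD subrr expr0n mulr0 subr0; lra.
have nearA : \forall v \near xm, A v.
  have sqc := continuous_sqnormB y xm.
  by near=> v; apply/andP; split; apply: ltW; near: v;
    [apply: (cvgr_gt _ sqc) | apply: (cvgr_lt _ sqc)].
have hpos : 0 < r ^+ 2 - D by rewrite subr_gt0.
suff : 2 * k.+1%:R * D <= n%:R * (r ^+ 2 - D).
  have : n%:R * (r ^+ 2 - D) <= n%:R * (r ^+ 2 - s ^+ 2).
    by rewrite ler_wpM2l // lerD2l lerN2 ltW.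
  have : 2 * k.+1%:R * s ^+ 2 < 2 * k.+1%:R * D by rewrite ltr_pM2l ?mulr_gt0 ?ltr0n.
  lra.
apply: (harmonic_barrier_local_min k (AU _ Axm) eps0 hpos).
by apply: filterS nearA => v Av; rewrite -!uE; apply: xmmin; rewrite inE.
Unshelve. all: by end_near.
Qed.

Lemma harmonic_pos_propagates {y p : 'rV[R]_n} {r : R} : 0 < r ->
  (forall x, sqnorm (x - y) <= r ^+ 2 -> U x /\ 0 <= z x) ->
  0 < z y -> sqnorm (p - y) < r ^+ 2 -> 0 < z p.
Proof.
move=> r0 ball_ge0 zy0 pr.
have [Uy _] : U y /\ 0 <= z y by apply: ball_ge0; rewrite subrr sqnorm0 sqr_ge0.
pose c := z y / 2; have c0 : 0 < c by rewrite divr_gt0.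
have zc : \forall x \near y, c < z x.
  have [dzy _ _ _] := hz.2 y Uy.
  by apply: (cvgr_gt _ (differentiable_continuous dzy)); rewrite ltr_pdivrMr // ltr_pMr // ltr1n.
have [s0 s00 zcs0] := near_sqnorm zc.
pose s := Num.min s0 (r / 2).
have s0' : 0 < s by rewrite lt_min s00 divr_gt0.
have sr : s ^+ 2 < r ^+ 2.
  have : s <= r / 2 by rewrite ge_min lexx orbT.
  by rewrite ltr_pXn2r ?nnegrE ?(ltW s0') ?(ltW r0) //; lra.
have zcs x : sqnorm (x - y) <= s ^+ 2 -> c < z x.
  move=> xs; apply: zcs0; apply: le_trans xs _.
  by rewrite ler_pXn2r ?nnegrE ?(ltW s0') ?(ltW s00) // ge_min lexx.
have [ps|sp] := lerP (sqnorm (p - y)) (s ^+ 2); first exact: lt_trans c0 (zcs p ps).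
pose k := Num.truncn (n%:R * (r ^+ 2 - s ^+ 2) / (2 * s ^+ 2)).
have kbig : n%:R * (r ^+ 2 - s ^+ 2) <= 2 * k.+1%:R * s ^+ 2.
  have := truncnS_gt (n%:R * (r ^+ 2 - s ^+ 2) / (2 * s ^+ 2)).
  by rewrite ltr_pdivrMr ?mulr_gt0 ?exprn_gt0 // mulrCA mulrA => /ltW.
have K0 : 0 < r ^+ 2 - s ^+ 2 by rewrite subr_gt0.
pose eps := c / (r ^+ 2 - s ^+ 2) ^+ k.+2.
have eps0 : 0 < eps by rewrite divr_gt0 ?exprn_gt0.
apply: lt_le_trans (harmonic_annulus_barrier y eps0 kbig _ _ _ p _).
- by rewrite mulr_gt0 ?exprn_gt0 ?subr_gt0.
- by move=> x /andP[_ /ball_ge0[]].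
- move=> x xs; rewrite /eps divfK ?expf_neq0 ?gt_eqF //.
  by apply/ltW/zcs; rewrite xs.
- by move=> x xr; case: (ball_ge0 x); rewrite ?xr.
- by rewrite /= (ltW sp) (ltW pr).
Qed.

Lemma harmonic_ge0_eq0_ball {rho : R} : 0 < rho -> eball0 rho `<=` U ->
  (forall x, eball0 rho x -> 0 <= z x) -> z 0 = 0 -> forall x, eball0 rho x -> z x = 0.
Proof.
move=> rho0 ballU ball_ge0 z0 x xrho.
pose N := Num.sqrt (sqnorm x).
have N0 : 0 <= N := sqrtr_ge0 _.
have NE : N ^+ 2 = sqnorm x by rewrite sqr_sqrtr ?sqnorm_ge0.
have Nrho : N < rho by rewrite -(ltr_pXn2r (n := 2)) ?nnegrE ?(ltW rho0) // NE.
pose r := (rho - N) / 2; have r0 : 0 < r by rewrite divr_gt0 ?subr_gt0.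
pose K := (Num.truncn (N / r)).+1.
have K0 : 0 < K%:R :> R by rewrite ltr0n.
have NK : N < K%:R * r by rewrite -ltr_pdivrMr //; apply: truncnS_gt.
suff zK j : (j <= K)%N -> z ((j%:R / K%:R) *: x) = 0.
  by have := zK K (leqnn K); rewrite divff ?gt_eqF // scale1r.
elim: j => [_|j IH jK]; first by rewrite mul0r scale0r.
pose y := (j.+1%:R / K%:R) *: x; pose p := (j%:R / K%:R) *: x.
have yN : sqnorm y <= N ^+ 2.
  rewrite sqnormZ NE ler_piMl ?sqnorm_ge0 // expr_le1 ?divr_ge0 //.
  by rewrite ler_pdivrMr // mul1r ler_nat.
have ball_y w : sqnorm (w - y) <= r ^+ 2 -> U w /\ 0 <= z w.
  move=> wy; have wrho : eball0 rho w.
    rewrite /eball0 /= -(subrK y w).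
    apply: le_lt_trans (sqnormD_le (ltW r0) N0 wy yN) _.
    by rewrite ltr_pXn2r ?nnegrE ?addr_ge0 ?(ltW r0) ?(ltW rho0) // /r; lra.
  by split; [apply: ballU | apply: ball_ge0].
have py : sqnorm (p - y) < r ^+ 2.
  have -> : p - y = (- K%:R^-1) *: x.
    by rewrite /p /y -scalerBl -mulrBl mulrS; congr (_ *: _); ring.
  rewrite sqnormZ sqrrN -NE -exprMn ltr_pXn2r ?nnegrE ?(ltW r0) ?mulr_ge0 ?invr_ge0 ?(ltW K0) //.
  by rewrite mulrC ltr_pdivrMr // mulrC.
have [_ zy0] : U y /\ 0 <= z y by apply: ball_y; rewrite subrr sqnorm0 sqr_ge0.
apply/eqP; rewrite -/y eq_le zy0 andbT leNgt; apply/negP => zy_pos.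
by have := harmonic_pos_propagates r0 ball_y zy_pos py; rewrite IH ?ltxx // ltnW.
Qed.

End Harmonic.

Lemma convex_sqrt_subquadratic {R : realType} {n : nat} {rho : R} {q z : 'rV[R]_n -> R} :
  (forall t x, q (t *: x) = t ^+ 2 * q x) -> z 0 = 0 ->
  (forall x, eball0 rho x -> 0 <= q x + z x) ->
  convex_on (eball0 rho) (fun x => Num.sqrt (q x + z x)) ->
  forall x t, eball0 rho x -> 0 <= t -> t <= 1 -> z (t *: x) <= t ^+ 2 * z x.
Proof.
move=> qZ z0 qz_ge0 qz_convex x t xrho t0 t1.
have q0 : q 0 = 0 by rewrite -(scale0r (0 : 'rV[R]_n)) qZ expr0n mul0r.
have rho0 : eball0 rho (0 : 'rV[R]_n).
  by rewrite /eball0 /= sqnorm0 (le_lt_trans (sqnorm_ge0 x)).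
have txrho : eball0 rho (t *: x).
  rewrite /eball0 /= sqnormZ (le_lt_trans _ xrho) // ler_piMl ?sqnorm_ge0 //.
  by rewrite expr_le1.
have := qz_convex x 0 t xrho rho0 t0 t1.
rewrite scaler0 addr0 q0 z0 addr0 sqrtr0 mulr0 addr0.
have -> : t * Num.sqrt (q x + z x) = Num.sqrt (t ^+ 2 * (q x + z x)).
  by rewrite sqrtrM ?sqr_ge0 // sqrtr_sqr ger0_norm.
rewrite ler_sqrt ?mulr_ge0 ?sqr_ge0 ?qz_ge0 // qZ.
lra.
Qed.

Theorem lemma2p1 (R : realType) (n : nat) (hn : (2 <= n)%N)
  (lam : 'I_n -> R) (hlam0 : forall i, 0 <= lam i)
  (hlam1 : \sum_(i < n) lam i = 1)
  (rho : R) (hrho : 0 < rho)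
  (z : 'rV[R]_n -> R) (U : set 'rV[R]_n)
  (hU : ecball0 rho `<=` U) (hz : harmonic_on U z)
  (hz0 : z 0 = 0)
  (hz1 : forall i, partial z i 0 = 0)
  (hz2 : forall i j, partial (partial z i) j 0 = 0)
  (hdef : forall x, eball0 rho x ->
            0 <= 2^-1 * (\sum_(i < n) lam i * x 0 i ^+ 2) + z x)
  (hconv : convex_on (eball0 rho)
     (fun x => Num.sqrt (2^-1 * (\sum_(i < n) lam i * x 0 i ^+ 2) + z x))) :
  forall x, eball0 rho x -> z x = 0.
Proof.
have ballU : eball0 rho `<=` U by move=> x /ltW; apply: hU.
have U0 : U 0 by apply: ballU (0 : 'rV[R]_n) _; rewrite /eball0 /= sqnorm0 exprn_gt0.
pose q (x : 'rV[R]_n) := 2^-1 * (\sum_(i < n) lam i * x 0 i ^+ 2).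
have qZ (t : R) x : q (t *: x) = t ^+ 2 * q x.
  by rewrite /q mulrCA; congr (_ * _); rewrite mulr_sumr; apply: eq_bigr => i _; rewrite mxE; ring.
have subquad := convex_sqrt_subquadratic qZ hz0 hdef hconv.
have dz_near : \forall y \near (0 : 'rV[R]_n), differentiable z y :=
  harmonic_differentiable_near hz U0.
have [_ dpz0 _ _] := hz.2 _ U0.
have z_ge0 x : eball0 rho x -> 0 <= z x.
  move=> xrho; apply: flat_subquadratic_ge0 dz_near dpz0 hz0 hz1 hz2 _.
  by move=> t t0 t1; apply: subquad => //; apply: ltW.
exact: (harmonic_ge0_eq0_ball hz hrho ballU z_ge0 hz0).
Qed.
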